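(* Assume that no connected component of nonabsorbing action profiles is rectangular. If $w\in W_H\setminus W$, then there are $\ell\in\{1,\dots,L\}$ and $x\in X^\ell$ such that $w\in W_H(x)$ and ${\cal E}_J(x)\ne\emptyset$.
   Context: $I$ is a finite set of players, $A_i$ finite nonempty action sets, $A=\prod_iA_i$, $r_i:A\to(0,1]$, $p:A\to[0,1]$. $B=\{a:p(a)=0\}$ with connected components $B^1,\dots,B^L$ in the graph where $a,a'\in B$ are adjacent iff $a_{-i}=a'_{-i}$ for some $i$; $B^\ell$ is rectangular if it is a product $\prod_iB^\ell_i$. Let $\Xi=\prod_i\Delta(A_i)$, $p(x)$ and $r_i(x)$ the multilinear extensions ($r_i(x)=\sum_ar_i(a)p(a)\prod_jx_j(a_j)/p(x)$ when $p(x)>0$), $X^\ell=\{x\in\Xi:\prod_i{\rm supp}(x_i)\subseteq B^\ell\}$, $X=\bigcup_\ell X^\ell$. $\rho_i(x):=\max\{r_i(a_i,x_{-i}):a_i\in A_i,\ p(a_i,x_{-i})>0\}$, with $\max\emptyset=-\infty$. For $x\in X$: $W_H(x):=\{w\in\mathbb R^I:w_i>\rho_i(x)\ \forall i\}$; $W(x):=\{w\in\mathbb R^I: w_i\ge\rho_i(x)\ \forall i,\ w_i=\rho_i(x)\text{ for some }i\}$; $W_H:=\bigcup_{x\in X}W_H(x)$, $W:=\bigcup_{x\in X}W(x)$. For $x\in X$, $(J,a_J)$ with $\emptyset\neq J\subseteq I$, $a_J\in\prod_{i\in J}A_i$, is an exit at $x$ if $p(a_J,x_{-J})>0$ and $p(a_{J'},x_{-J'})=0$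 for all proper $J'\subsetneq J$; a joint exit if $|J|\ge 2$; ${\cal E}_J(x)$ is the set of joint exits at $x$. *)

From HB Require Import structures.
From mathcomp Require Import all_boot all_order all_algebra.
From mathcomp Require Import reals constructive_ereal.
Set Implicit Arguments. Unset Strict Implicit. Unset Printing Implicit Defensive.
Import Order.TTheory GRing.Theory Num.Theory.
Local Open Scope ring_scope.

Section Game.
Context {R : realType} {I : finType} (A : I -> finType).

Definition profile := {dffun forall i : I, A i}.

(* mixed action profiles (elements of prod_i R^{A_i}); x in Xi iff is_mixed x *)
Definition mprofile := forall i : I, {ffun A i -> R}.

Definition is_mixed (x : mprofile) : Prop :=
  forall i, (forall a, 0 <= x i a) /\ \sum_(a : A i) x i a = 1.

Definition pdelta (i : I) (a : A i) : {ffun A i -> R} :=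
  [ffun b => if b == a then 1 else 0].

Definition deviate1 (x : mprofile) (i : I) (ai : A i) : mprofile :=
  dfwith x (pdelta ai).

(* (a_J, x_{-J}); only the coordinates of a in J are used *)
Definition deviate (x : mprofile) (J : {set I}) (a : profile) : mprofile :=
  fun j => if j \in J then pdelta (a j) else x j.

Definition mlext (f : profile -> R) (y : mprofile) : R :=
  \sum_(a : profile) f a * \prod_(j : I) y j (a j).

Variables (r : I -> profile -> R) (p : profile -> R).

Definition rx (i : I) (y : mprofile) : R :=
  mlext (fun a => r i a * p a) y / mlext p y.

Definition rho (x : mprofile) (i : I) : \bar R :=
  \big[Order.max/-oo%E]_(ai : A i | 0 < mlext p (deviate1 x ai))
     (rx i (deviate1 x ai))%:E.

Definition adjB : rel profile := fun a b =>
  [&& p a == 0, p b == 0 & [exists i, [forall j, (j != i) ==> (a j == b j)]]].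

(* C is one of the connected components B^1, ..., B^L *)
Definition is_component (C : {set profile}) : Prop :=
  exists a, p a = 0 /\ C = [set b | connect adjB a b].

Definition rectangular (C : {set profile}) : Prop :=
  exists Ci : forall i, {set A i}, C = [set a : profile | [forall i, a i \in Ci i]].

Definition inXC (C : {set profile}) (x : mprofile) : Prop :=
  is_mixed x /\ forall a : profile, (forall i, 0 < x i (a i)) -> a \in C.

Definition inX (x : mprofile) : Prop := exists C, is_component C /\ inXC C x.

Definition inWHx (x : mprofile) (w : I -> R) : Prop :=
  forall i, (rho x i < (w i)%:E)%E.

Definition inWx (x : mprofile) (w : I -> R) : Prop :=
  (forall i, (rho x i <= (w i)%:E)%E) /\ exists i, rho x i = (w i)%:E.

Definition inWH (w : I -> R) : Prop := exists x, inX x /\ inWHx x w.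
Definition inW (w : I -> R) : Prop := exists x, inX x /\ inWx x w.

Definition is_exit (x : mprofile) (J : {set I}) (aJ : profile) : Prop :=
  J != set0 /\ 0 < mlext p (deviate x J aJ) /\
  forall J' : {set I}, J' \proper J -> mlext p (deviate x J' aJ) = 0.

Definition has_joint_exit (x : mprofile) : Prop :=
  exists (J : {set I}) (aJ : profile), (2 <= #|J|)%N /\ is_exit x J aJ.

End Game.

From HB Require Import structures.
From mathcomp Require Import all_boot all_order all_algebra.
From mathcomp Require Import reals constructive_ereal boolp.
From mathcomp Require Import ring lra.
Import Order.TTheory GRing.Theory Num.Theory.
Local Open Scope ring_scope.

(* Suppose that no point x of some X^l with w in W_H(x) has a joint exit.
   Along a segment that moves the mixed action of a single player and stays in
   X, each of the finitely many strict inequalities defining W_H is an affine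
   condition; as w is not in W, none of them can become an equality first, so
   w stays in W_H along the segment.  Moving the players one at a time to an
   action of their support, then walking along the edges of B^l (a step that
   would otherwise create a joint exit), gives w in W_H(s) for every pure s in
   B^l.  At such an s the absence of joint exits says that a joint deviation
   stays in B whenever its unilateral parts do; transporting this along B^l
   shows that B^l is the product of its projections, i.e. rectangular. *)

Set Implicit Arguments. Unset Strict Implicit. Unset Printing Implicit Defensive.

Section Multilinear.
Context {R : realType} {I : finType} (A : I -> finType).
Local Notation mprofile := (mprofile (R:=R) A).

Lemma mprofile_ext (y z : mprofile) : (forall j b, y j b = z j b) -> y = z.
Proof. by move=> e; apply: functional_extensionality_dep => j; apply/ffunP/e. Qed.

Lemma pdeltaE i (a b : A i) : pdelta (R:=R) a b = (b == a)%:R.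
Proof. by rewrite /pdelta ffunE; case: eqP. Qed.

Lemma pdelta_ge0 i (a b : A i) : 0 <= pdelta (R:=R) a b.
Proof. by rewrite pdeltaE. Qed.

Lemma pdelta_gt0 i (a b : A i) : (0 < pdelta (R:=R) a b) = (b == a).
Proof. by rewrite pdeltaE; case: eqP; rewrite ?ltr01 ?ltxx. Qed.

Lemma sum_pdelta i (a : A i) : \sum_b pdelta (R:=R) a b = 1.
Proof.
rewrite (bigD1 a) //= pdeltaE eqxx big1 ?addr0 // => b /negbTE ba.
by rewrite pdeltaE ba.
Qed.

Definition pure (s : profile A) : mprofile := fun j => pdelta (s j).

Lemma pure_mixed s : is_mixed (pure s).
Proof. by move=> j; split=> [b|]; [apply: pdelta_ge0|apply: sum_pdelta]. Qed.

Lemma mlext_ge0 f (y : mprofile) :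
  (forall a, 0 <= f a) -> (forall j b, 0 <= y j b) -> 0 <= mlext f y.
Proof. by move=> f0 y0; apply: sumr_ge0 => a _; rewrite mulr_ge0 ?prodr_ge0. Qed.

Lemma mlextB f g (y : mprofile) :
  mlext (fun a => f a - g a) y = mlext f y - mlext g y.
Proof. by rewrite /mlext -sumrB; apply: eq_bigr => a _; rewrite mulrBl. Qed.

Lemma mlextZ c f (y : mprofile) : mlext (fun a => c * f a) y = c * mlext f y.
Proof. by rewrite /mlext mulr_sumr; apply: eq_bigr => a _; rewrite mulrA. Qed.

Lemma mlext_pure f s : mlext f (pure s) = f s.
Proof.
rewrite /mlext (bigD1 s) //= big1 => [|j _]; last by rewrite pdeltaE eqxx.
rewrite mulr1 big1 ?addr0 // => a /eqP nas.
have [j naj] : exists j, a j != s j.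
  by apply/existsP; apply: contra_notT nas => /existsPn e; apply/ffunP=> j; apply/eqP/negPn.
by rewrite (bigD1 j) //= pdeltaE (negbTE naj) mul0r mulr0.
Qed.

Lemma dfwith_ge0 (y : mprofile) i (u : {ffun A i -> R}) :
  (forall j b, 0 <= y j b) -> (forall b, 0 <= u b) -> forall j b, 0 <= dfwith y u j b.
Proof. by move=> y0 u0 j; case: (eqVneq i j) => [<-|ij] b; rewrite ?dfwith_in ?dfwith_out. Qed.

Lemma mlext_sum_dfwith f (y : mprofile) i :
  mlext f y = \sum_(b : A i) y i b * mlext f (dfwith y (pdelta b)).
Proof.
under [RHS]eq_bigr => b _ do rewrite /mlext big_distrr /=.
rewrite exchange_big /=; apply: eq_bigr => a _.
rewrite (bigD1 i) //=; set Q := \prod_(j | j != i) y j (a j).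
have QE b : \prod_j dfwith y (pdelta b) j (a j) = pdelta b (a i) * Q.
  rewrite (bigD1 i) //= dfwith_in; congr (_ * _).
  by apply: eq_bigr => j ji; rewrite dfwith_out // eq_sym.
under eq_bigr => b _ do rewrite QE pdeltaE.
rewrite (bigD1 (a i)) //= eqxx big1 ?addr0 => [|b /negbTE ba]; first by rewrite mul1r mulrCA.
by rewrite eq_sym ba !(mul0r, mulr0).
Qed.

Lemma mlext_ge_dfwith f (y : mprofile) i (b : A i) :
  (forall a, 0 <= f a) -> (forall j b, 0 <= y j b) ->
  y i b * mlext f (dfwith y (pdelta b)) <= mlext f y.
Proof.
move=> f0 y0; rewrite (mlext_sum_dfwith f y i) (bigD1 b) //= lerDl.
apply: sumr_ge0 => c _; rewrite mulr_ge0 ?mlext_ge0 //.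
by apply: dfwith_ge0 => // d; apply: pdelta_ge0.
Qed.

Lemma mlext_affine f (y y0 y1 : mprofile) i t :
  (forall j, j != i -> y j = y0 j /\ y1 j = y0 j) ->
  (forall b, y i b = (1 - t) * y0 i b + t * y1 i b) ->
  mlext f y = (1 - t) * mlext f y0 + t * mlext f y1.
Proof.
move=> off at_i; rewrite !(mlext_sum_dfwith f _ i) !big_distrr -big_split /=.
apply: eq_bigr => b _.
have off_i z : (forall j, j != i -> z j = y0 j) -> dfwith z (pdelta b) = dfwith y0 (pdelta b).
  move=> e; apply: mprofile_ext => j.
  by case: (eqVneq i j) => [<-|ij] c; rewrite ?dfwith_in ?dfwith_out // e // eq_sym.
rewrite off_i => [|j /off []//]; rewrite (off_i y1) => [|j /off []//].
by rewrite at_i; ring.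
Qed.

Lemma mlext_eq0_mul f g (y : mprofile) :
  (forall a, 0 <= f a) -> (forall j b, 0 <= y j b) ->
  mlext f y = 0 -> mlext (fun a => g a * f a) y = 0.
Proof.
move=> f0 y0 /psumr_eq0P fy0; apply: big1 => a _.
by rewrite -mulrA fy0 ?mulr0 // => c _; rewrite mulr_ge0 ?prodr_ge0.
Qed.

Lemma dfwith_id (y : mprofile) i : dfwith y (y i) = y.
Proof.
apply: mprofile_ext => j.
by case: (eqVneq i j) => [<-|ij] b; rewrite ?dfwith_in ?dfwith_out.
Qed.

Lemma dfwith_dfwith (y : mprofile) i (u v : {ffun A i -> R}) :
  dfwith (dfwith y u) v = dfwith y v.
Proof.
apply: mprofile_ext => j.
by case: (eqVneq i j) => [<-|ij] b; rewrite ?dfwith_in ?dfwith_out.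
Qed.

Lemma dfwithC (y : mprofile) i k (u : {ffun A i -> R}) (v : {ffun A k -> R}) :
  i != k -> dfwith (dfwith y u) v = dfwith (dfwith y v) u.
Proof.
move=> ik; apply: mprofile_ext => j.
case: (eqVneq i j) => [<-|ij].
  by move=> b; rewrite dfwith_in dfwith_out ?dfwith_in // eq_sym.
case: (eqVneq k j) => [<-|kj] b; first by rewrite dfwith_in dfwith_out ?dfwith_in.
by rewrite !dfwith_out.
Qed.

Lemma mlext_deviate1_gt0 f (y : mprofile) i (u : {ffun A i -> R}) b k (a : A k) :
  (forall c, 0 <= f c) -> (forall j b, 0 <= y j b) -> (forall b, 0 <= u b) -> 0 < u b ->
  0 < mlext f (deviate1 (dfwith y (pdelta b)) a) -> 0 < mlext f (deviate1 (dfwith y u) a).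
Proof.
move=> f0 y0 u0 ub; rewrite /deviate1; have [ik|ik] := eqVneq i k.
  by subst k; rewrite !dfwith_dfwith.
rewrite !(dfwithC _ _ _ ik) => pos; apply: lt_le_trans (mlext_ge_dfwith b f0 _).
  by rewrite dfwith_in dfwith_dfwith mulr_gt0.
by do 2!apply: dfwith_ge0 => //; apply: pdelta_ge0.
Qed.

Definition mix i (u v : {ffun A i -> R}) t : {ffun A i -> R} :=
  [ffun b => (1 - t) * u b + t * v b].

Lemma mix_ge0 i (u v : {ffun A i -> R}) t : 0 <= t <= 1 ->
  (forall b, 0 <= u b) -> (forall b, 0 <= v b) -> forall b, 0 <= mix u v t b.
Proof. by move=> /andP[t0 t1] u0 v0 b; rewrite ffunE addr_ge0 ?mulr_ge0 ?subr_ge0. Qed.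

Lemma sum_mix i (u v : {ffun A i -> R}) t :
  \sum_b u b = 1 -> \sum_b v b = 1 -> \sum_b mix u v t b = 1.
Proof.
move=> u1 v1; under eq_bigr => b _ do rewrite ffunE.
by rewrite big_split /= -!mulr_sumr u1 v1 !mulr1 subrK.
Qed.

Lemma mix_gt0 i (u v : {ffun A i -> R}) t b :
  0 <= u b -> 0 <= v b -> 0 < mix u v t b -> 0 < u b \/ 0 < v b.
Proof.
rewrite ffunE => u0 v0 uv; apply/orP; rewrite !lt_def u0 v0 !andbT -negb_and.
by apply: contraTN uv => /andP[/eqP-> /eqP->]; rewrite !mulr0 addr0 ltxx.
Qed.

Lemma mlext_deviate1_mix f (x : mprofile) i (u v : {ffun A i -> R}) t k (a : A k) :
  mlext f (deviate1 (dfwith x (mix u v t)) a) =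
  (1 - t) * mlext f (deviate1 (dfwith x u) a) + t * mlext f (deviate1 (dfwith x v) a).
Proof.
apply: (mlext_affine _ (i := i)) => [j ji|b]; rewrite /deviate1.
  case: (eqVneq k j) => [<-|kj]; first by rewrite !dfwith_in.
  by rewrite !(dfwith_out _ _ kj) !dfwith_out // eq_sym.
case: (eqVneq k i) => [ki|ki]; first by subst k; rewrite !dfwith_in; ring.
by rewrite !(dfwith_out _ _ ki) !dfwith_in ffunE.
Qed.

End Multilinear.

Lemma first_crossing {R : realType} (T : finType) (f0 f1 : T -> R) (S : pred T) q0 :
  S q0 -> (forall q, S q -> f0 q < 0 <= f1 q) ->
  exists t, [/\ 0 < t <= 1, forall q, S q -> (1 - t) * f0 q + t * f1 q <= 0
              & exists2 q, S q & (1 - t) * f0 q + t * f1 q = 0].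
Proof.
move=> Sq0 sgn; pose tau q := - f0 q / (f1 q - f0 q).
have tauE q : S q -> tau q * (f1 q - f0 q) = - f0 q.
  by move=> /sgn/andP[? ?]; rewrite divfK // subr_eq0 gt_eqF //; lra.
have [qm Sqm tau_min] := arg_minP tau Sq0.
have /andP[f0m f1m] := sgn _ Sqm.
exists (tau qm); split.
- rewrite divr_gt0 ?oppr_gt0 ?ler_pdivrMr ?mul1r ?subr_gt0 //=; lra.
- move=> q Sq; have /andP[f0q f1q] := sgn _ Sq.
  have : tau qm * (f1 q - f0 q) <= tau q * (f1 q - f0 q).
    by rewrite ler_wpM2r ?tau_min // subr_ge0; lra.
  by rewrite tauE //; lra.
- by exists qm => //; have := tauE _ Sqm; lra.
Qed.

Lemma excess_mix_le0 {R : realType} (P0 P1 E0 E1 t : R) :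
  0 <= t <= 1 -> 0 <= P0 -> 0 <= P1 -> (0 < P1 -> 0 < P0) ->
  (0 < P0 -> E0 < 0) -> (0 < P1 -> E1 < 0) -> (P1 = 0 -> E1 = 0) ->
  0 < (1 - t) * P0 + t * P1 -> (1 - t) * E0 + t * E1 <= 0.
Proof.
move=> /andP[t0 t1] P0_ge0 P1_ge0 supp neg0 neg1 zero1 pos.
have E1_le0 : E1 <= 0.
  have [/neg1/ltW //|P1_le0] := ltP 0 P1.
  by rewrite zero1 //; apply/le_anti; rewrite P1_le0.
have P0_gt0 : 0 < P0.
  rewrite lt_def P0_ge0 andbT; apply: contraTneq pos => P0_0.
  have : ~~ (0 < P1) by apply/negP => /supp; rewrite P0_0 ltxx.
  rewrite -leNgt => P1_le0; have -> : P1 = 0 by apply/le_anti; rewrite P1_le0.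
  by rewrite P0_0 !mulr0 addr0 ltxx.
have : (1 - t) * E0 <= 0 by rewrite mulr_ge0_le0 ?subr_ge0 // ltW ?neg0.
have : t * E1 <= 0 by rewrite mulr_ge0_le0.
lra.
Qed.

Section Payoffs.
Context {R : realType} {I : finType} (A : I -> finType).
Context (r : I -> profile A -> R) (p : profile A -> R).
Local Notation mprofile := (mprofile (R:=R) A).

Definition excess (w : I -> R) k (z : mprofile) : R :=
  mlext (fun a => (r k a - w k) * p a) z.

Lemma excessE w k z : excess w k z = mlext (fun a => r k a * p a) z - w k * mlext p z.
Proof. by rewrite -mlextZ -mlextB; apply: eq_bigr => a _; rewrite mulrBl. Qed.

Lemma rx_lt_excess w k z : 0 < mlext p z -> (rx r p k z < w k) = (excess w k z < 0).
Proof. by move=> pz; rewrite /rx ltr_pdivrMr // excessE subr_lt0. Qed.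

Lemma rx_le_excess w k z : 0 < mlext p z -> (rx r p k z <= w k) = (excess w k z <= 0).
Proof. by move=> pz; rewrite /rx ler_pdivrMr // excessE subr_le0. Qed.

Lemma rx_excess_eq0 w k z : 0 < mlext p z -> excess w k z = 0 -> rx r p k z = w k.
Proof. by rewrite excessE => pz /eqP; rewrite subr_eq0 /rx => /eqP->; rewrite mulfK ?gt_eqF. Qed.

Lemma inWHxP y w : inWHx r p y w <->
  forall k (a : A k), 0 < mlext p (deviate1 y a) -> excess w k (deviate1 y a) < 0.
Proof.
split=> [WH k a pa | neg k].
  by move/bigmax_ltP: (WH k) => [_ /(_ a pa)]; rewrite lte_fin rx_lt_excess.
apply/bigmax_ltP; split=> [|a pa]; first exact: ltNyr.
by rewrite lte_fin rx_lt_excess ?neg.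
Qed.

Lemma inWx_excess y w :
  (forall k (a : A k), 0 < mlext p (deviate1 y a) -> excess w k (deviate1 y a) <= 0) ->
  (exists k (a : A k), 0 < mlext p (deviate1 y a) /\ excess w k (deviate1 y a) = 0) ->
  inWx r p y w.
Proof.
move=> nonpos [k [a [pa e0]]].
have rho_le j : (rho r p y j <= (w j)%:E)%E.
  apply/bigmax_leP; split=> [|b pb]; first exact: leNye.
  by rewrite lee_fin rx_le_excess ?nonpos.
split=> //; exists k; apply/le_anti; rewrite rho_le /= -(rx_excess_eq0 pa e0).
exact: le_bigmax_cond.
Qed.

End Payoffs.

Section Components.
Context {R : realType} {I : finType} (A : I -> finType) (p : profile A -> R).

Lemma adjB_sym : symmetric (adjB p).
Proof.
move=> a b; rewrite /adjB andbCA; congr (_ && (_ && _)).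
by apply: eq_existsb => i; apply: eq_forallb => j; rewrite [a j == _]eq_sym.
Qed.

Lemma adjBP s t : adjB p s t ->
  [/\ p s = 0, p t = 0 & exists i, forall j, j != i -> s j = t j].
Proof.
case/and3P=> /eqP ps /eqP pt /existsP[i /forallP st]; split=> //.
by exists i => j ji; apply/eqP; have /implyP := st j; apply.
Qed.

Lemma component_connect C s t : is_component p C -> s \in C ->
  connect (adjB p) s t -> t \in C.
Proof. by case=> a [_ ->]; rewrite !inE => /connect_trans; apply. Qed.

Lemma component_p_eq0 C s : is_component p C -> s \in C -> p s = 0.
Proof.
case=> a [pa ->]; rewrite inE => /connectP[q pth ->] {s}.
by elim: q a pa pth => //= b q IH a _ /andP[/adjBP[_ pb _] /IH]; apply.
Qed.

Lemma component_ind C (P : profile A -> Prop) s t :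
  is_component p C -> s \in C -> t \in C -> P s ->
  (forall u v, u \in C -> adjB p u v -> P u -> P v) -> P t.
Proof.
move=> compC sC tC Ps step.
have /connectP[q pth ->] : connect (adjB p) s t.
  case: compC sC tC => a [_ ->]; rewrite !inE => as_ at_.
  by apply: connect_trans at_; rewrite (sym_connect_sym adjB_sym).
elim: q s sC Ps pth => //= u q IH s sC Ps /andP[su pth].
apply: IH pth; first exact: component_connect compC sC (connect1 su).
exact: step su Ps.
Qed.

Definition pdeviate (s : profile A) (J : {set I}) (c : profile A) : profile A :=
  [ffun j => if j \in J then c j else s j].

Definition pdeviate1 (s : profile A) k (a : A k) : profile A :=
  [ffun j => dfwith (fun j => s j) a j].

Lemma pdeviateE s J c j : pdeviate s J c j = if j \in J then c j else s j.
Proof. by rewrite ffunE. Qed.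

Lemma pdeviate0 s c : pdeviate s set0 c = s.
Proof. by apply/ffunP => j; rewrite pdeviateE in_set0. Qed.

Lemma pdeviateT s c : pdeviate s setT c = c.
Proof. by apply/ffunP => j; rewrite pdeviateE in_setT. Qed.

Lemma pdeviate1_in s k (a : A k) : pdeviate1 s a k = a.
Proof. by rewrite ffunE dfwith_in. Qed.

Lemma pdeviate1_out s k (a : A k) j : k != j -> pdeviate1 s a j = s j.
Proof. by move=> kj; rewrite ffunE dfwith_out. Qed.

Lemma deviate_pure s J c :
  deviate (pure (R:=R) s) J c = pure (pdeviate s J c).
Proof. by apply: mprofile_ext => j b; rewrite /deviate /pure pdeviateE; case: ifP. Qed.

Lemma deviate1_pure s k (a : A k) :
  deviate1 (pure (R:=R) s) a = pure (pdeviate1 s a).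
Proof.
apply: mprofile_ext => j; rewrite /deviate1 /pure.
by case: (eqVneq k j) => [<-|kj] b; rewrite ?dfwith_in ?pdeviate1_in ?dfwith_out ?pdeviate1_out.
Qed.

Lemma pdeviate_set1 s l c : pdeviate s [set l] c = pdeviate1 s (c l).
Proof.
apply/ffunP => j; rewrite pdeviateE in_set1.
case: (eqVneq l j) => [<-|lj]; first by rewrite ?eqxx pdeviate1_in.
by rewrite pdeviate1_out // eq_sym (negbTE lj).
Qed.

Lemma pdeviate1_agree (s t : profile A) i :
  (forall j, j != i -> s j = t j) -> pdeviate1 s (t i) = t.
Proof.
move=> st; apply/ffunP => j.
by case: (eqVneq i j) => [<-|ij]; rewrite ?pdeviate1_in // pdeviate1_out // st // eq_sym.
Qed.

Definition deviation_closed (s : profile A) : Prop :=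
  forall (J : {set I}) (c : profile A),
    (forall l, l \in J -> p (pdeviate1 s (c l)) = 0) -> p (pdeviate s J c) = 0.

Lemma deviation_closed_pure s : (forall a, 0 <= p a) -> p s = 0 ->
  ~ has_joint_exit p (pure (R:=R) s) -> deviation_closed s.
Proof.
move=> p_ge0 ps no_exit J c; elim: {J}_.+1 {-2}J (ltnSn #|J|) => // n IH J.
rewrite ltnS => Jn singles; have [J2|] := leqP 2 #|J|.
  apply/eqP; rewrite eq_le p_ge0 andbT leNgt; apply/negP => pJ.
  apply: no_exit; exists J, c; split=> //; split; first by rewrite -card_gt0 (leq_trans _ J2).
  rewrite deviate_pure mlext_pure; split=> // J' J'J; rewrite deviate_pure mlext_pure.
  apply: IH => [|l lJ']; first exact: leq_trans (proper_card J'J) Jn.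
  by apply: singles; apply: subsetP (proper_sub J'J) l lJ'.
rewrite ltnS leq_eqVlt ltnS leqn0 cards_eq0 => /orP[/cards1P[l J1]|/eqP->].
  by rewrite J1 pdeviate_set1 singles // J1 in_set1.
by rewrite pdeviate0.
Qed.

Lemma deviation_closed_adj s t k (a : A k) : deviation_closed s -> adjB p s t ->
  p (pdeviate1 s a) = 0 -> p (pdeviate1 t a) = 0.
Proof.
move=> closed /adjBP[ps pt [i st]] psa.
have [ki|ki] := eqVneq k i.
  subst k; rewrite -psa; congr p; apply/ffunP => j.
  by case: (eqVneq i j) => [<-|ij]; rewrite ?pdeviate1_in // !pdeviate1_out // st // eq_sym.
set c := pdeviate1 t a.
have -> : c = pdeviate s [set i; k] c.
  apply/ffunP => j; rewrite pdeviateE !inE; case: ifPn => // /norP[ji jk].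
  by rewrite pdeviate1_out ?st // eq_sym.
apply: closed => m; rewrite !inE => /orP[/eqP->|/eqP->].
  by rewrite pdeviate1_out // (pdeviate1_agree st).
by rewrite /c pdeviate1_in.
Qed.

Lemma connect_pdeviate s c : p s = 0 -> (forall J, p (pdeviate s J c) = 0) ->
  forall J, connect (adjB p) s (pdeviate s J c).
Proof.
move=> ps pJ J; elim: {J}_.+1 {-2}J (ltnSn #|J|) => // n IH J.
rewrite ltnS => Jn; have [->|[l lJ]] := set_0Vmem J; first by rewrite pdeviate0.
apply: connect_trans (IH (J :\ l) _) (connect1 _).
  by move: Jn; rewrite (cardsD1 l J) lJ.
apply/and3P; split; rewrite ?pJ //; apply/existsP; exists l.
by apply/forallP => j; apply/implyP => jl; rewrite !pdeviateE in_setD1 jl.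
Qed.

Lemma component_rectangular C : is_component p C ->
  (forall s, s \in C -> deviation_closed s) -> rectangular C.
Proof.
move=> compC closed; have [s0 s0C] : exists s0, s0 \in C.
  by case: (compC) => a [_ ->]; exists a; rewrite inE connect0.
exists (fun i => [set (c : profile A) i | c in C]); apply/setP => a; rewrite inE.
apply/idP/forallP => [aC i|proj]; first by apply/imsetP; exists a.
have single l : p (pdeviate1 s0 (a l)) = 0.
  have [b bC ->] := imsetP (proj l).
  apply: (component_ind (P := fun s => p (pdeviate1 s (b l)) = 0) compC bC s0C).
    by rewrite pdeviate1_agree // (component_p_eq0 compC bC).
  by move=> u v uC; apply/deviation_closed_adj/closed.
have ps0 := component_p_eq0 compC s0C.
apply: (component_connect compC s0C); rewrite -(pdeviateT s0 a).
by apply: connect_pdeviate => // J; apply: closed => // l _; apply: single.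
Qed.

End Components.

Section Propagation.
Context {R : realType} {I : finType} (A : I -> finType).
Context (r : I -> profile A -> R) (p : profile A -> R).
Hypothesis p_ge0 : forall a, 0 <= p a.
Local Notation mprofile := (mprofile (R:=R) A).

(* Along [t |-> dfwith x (mix u v t)] every excess is affine in [t]; if the
   strict inequalities defining [W_H] failed at [t = 1], the first time one of
   them becomes an equality would give a point of [W]. *)
Lemma inWHx_segment (x : mprofile) i (u v : {ffun A i -> R}) w :
  (forall j b, 0 <= x j b) -> (forall b, 0 <= u b) -> (forall b, 0 <= v b) ->
  ~ inW r p w ->
  (forall t, 0 < t <= 1 -> inX p (dfwith x (mix u v t))) ->
  (forall k (a : A k), 0 < mlext p (deviate1 (dfwith x v) a) ->
                       0 < mlext p (deviate1 (dfwith x u) a)) ->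
  inWHx r p (dfwith x u) w -> inWHx r p (dfwith x v) w.
Proof.
move=> x0 u0 v0 notW X_seg supp /inWHxP neg_u; apply/inWHxP.
pose P (z : {ffun A i -> R}) k (a : A k) := mlext p (deviate1 (dfwith x z) a).
pose E (z : {ffun A i -> R}) k (a : A k) := excess r p w k (deviate1 (dfwith x z) a).
have dev_ge0 (z : {ffun A i -> R}) k (a : A k) :
    (forall b, 0 <= z b) -> forall j b, 0 <= deviate1 (dfwith x z) a j b.
  by move=> z0; apply: dfwith_ge0 => [|b]; [exact: dfwith_ge0|exact: pdelta_ge0].
have P_ge0 (z : {ffun A i -> R}) k (a : A k) : (forall b, 0 <= z b) -> 0 <= P z k a.
  by move=> z0; apply: mlext_ge0 => //; apply: dev_ge0.
have E_v_eq0 k (a : A k) : P v k a = 0 -> E v k a = 0.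
  by move=> pv; apply: mlext_eq0_mul => //; apply: dev_ge0.
have P_mix t k (a : A k) : P (mix u v t) k a = (1 - t) * P u k a + t * P v k a.
  exact: mlext_deviate1_mix.
have E_mix t k (a : A k) : E (mix u v t) k a = (1 - t) * E u k a + t * E v k a.
  exact: mlext_deviate1_mix.
move=> k a pv; rewrite ltNge; apply/negP => ev.
pose S (q : {k : I & A k}) := (0 < P v (tag q) (tagged q)) && (0 <= E v (tag q) (tagged q)).
have sgn q : S q -> E u (tag q) (tagged q) < 0 <= E v (tag q) (tagged q).
  by case/andP=> /supp/neg_u-> ->.
have Sa : S (Tagged A a) by rewrite /S /= pv ev.
have [t [/andP[t0 t1] nonpos [qm /andP[pvm _] e0]]] := first_crossing Sa sgn.
apply: notW; exists (dfwith x (mix u v t)); split; first by apply: X_seg; rewrite t0 t1.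
apply: inWx_excess => [k' a' pt|].
  rewrite -/(P _ k' a') P_mix in pt; rewrite -/(E _ k' a') E_mix.
  have [Sq|] := boolP (S (Tagged A a')); first exact: (nonpos _ Sq).
  rewrite /S /= negb_and -ltNge -leNgt => nS.
  apply: (excess_mix_le0 _ (P_ge0 _ _ _ u0) (P_ge0 _ _ _ v0) (@supp _ _) (@neg_u _ _) _
    (@E_v_eq0 _ _) pt); first by rewrite ltW.
  by move=> pv'; case/orP: nS; rewrite // leNgt pv'.
exists (tag qm), (tagged qm).
change (0 < P (mix u v t) _ (tagged qm) /\ E (mix u v t) _ (tagged qm) = 0).
rewrite P_mix E_mix e0; split=> //.
have pum : 0 < P u _ (tagged qm) := supp _ _ pvm.
by rewrite ltr_wpDl ?mulr_gt0 // mulr_ge0 ?subr_ge0 // ltW.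
Qed.

Lemma inX_dfwith_mix C (x : mprofile) i (u v : {ffun A i -> R}) t :
  is_component p C -> is_mixed x ->
  (forall b, 0 <= u b) -> \sum_b u b = 1 -> (forall b, 0 <= v b) -> \sum_b v b = 1 ->
  0 <= t <= 1 ->
  (forall a : profile A, (forall j, j != i -> 0 < x j (a j)) ->
     0 < u (a i) \/ 0 < v (a i) -> a \in C) ->
  inX p (dfwith x (mix u v t)).
Proof.
move=> compC xmix u0 u1 v0 v1 t01 supp; exists C; split=> //; split.
  move=> j; case: (eqVneq i j) => [<-|ij]; rewrite ?dfwith_in ?dfwith_out //.
  by split; [apply: mix_ge0|apply: sum_mix].
move=> a pos; apply: supp => [j ji|]; first by have := pos j; rewrite dfwith_out // eq_sym.
by have := pos i; rewrite dfwith_in; apply: mix_gt0.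
Qed.

Lemma inXC_pure (C : {set profile A}) (s : profile A) :
  s \in C -> inXC C (pure (R:=R) s).
Proof.
move=> sC; split=> [|a pos]; first exact: pure_mixed.
suff -> : a = s by [].
by apply/ffunP => j; have := pos j; rewrite pdelta_gt0 => /eqP.
Qed.

Lemma mixed_full_support (x : mprofile) : is_mixed x ->
  exists s : profile A, forall j, 0 < x j (s j).
Proof.
move=> xmix; have pos j : exists b, 0 < x j b.
  have [x0 x1] := xmix j; apply/existsP; apply: contraLR (oner_neq0 R) => /existsPn neg.
  by rewrite negbK -x1 psumr_eq0 //; apply/allP => b _; rewrite eq_le x0 leNgt neg.
by exists [ffun j => xchoose (pos j)] => j; rewrite ffunE (xchooseP (pos j)).
Qed.

Lemma inWHx_purify C (x : mprofile) (s : profile A) w :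
  ~ inW r p w -> is_component p C -> inXC C x -> (forall j, 0 < x j (s j)) ->
  inWHx r p x w -> inWHx r p (pure s) w.
Proof.
move=> notW compC [xmix xC] xs WHx.
suff WH_dev J : inWHx r p (deviate x J s) w.
  rewrite (_ : pure s = deviate x setT s) //.
  by apply: mprofile_ext => j b; rewrite /deviate in_setT.
elim: {J}_.+1 {-2}J (ltnSn #|J|) => // n IH J; rewrite ltnS => Jn.
have [->|[l lJ]] := set_0Vmem J.
  rewrite (_ : deviate x set0 s = x) //.
  by apply: mprofile_ext => j b; rewrite /deviate in_set0.
set y := deviate x (J :\ l) s.
have y_mixed : is_mixed y.
  by move=> j; rewrite /y /deviate; case: ifP => // _; apply: pure_mixed.
have y_supp j b : 0 < y j b -> 0 < x j b.
  by rewrite /y /deviate; case: ifP => // _; rewrite pdelta_gt0 => /eqP->.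
have <- : dfwith y (pdelta (s l)) = deviate x J s.
  apply: mprofile_ext => j.
  case: (eqVneq l j) => [<-|lj] b; first by rewrite dfwith_in /deviate lJ.
  by rewrite dfwith_out // /y /deviate in_setD1 eq_sym lj.
have y_l : y l = x l by rewrite /y /deviate in_setD1 eqxx.
have y0 j b : 0 <= y j b by case: (y_mixed j).
have [xl0 xl1] := xmix l.
apply: (inWHx_segment (u := x l)) => // [b|t /andP[t0 t1]|k a|].
- exact: pdelta_ge0.
- apply: (inX_dfwith_mix compC) => //; rewrite ?(ltW t0) ?t1 ?sum_pdelta //.
    exact: pdelta_ge0.
  move=> a pos_j pos_l; apply: xC => j; have [<-|lj] := eqVneq l j.
    by case: pos_l => //; rewrite pdelta_gt0 => /eqP->.
  by apply: y_supp; apply: pos_j; rewrite eq_sym.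
- exact: mlext_deviate1_gt0 (xs l).
- by rewrite -y_l dfwith_id; apply: IH; move: Jn; rewrite (cardsD1 l J) lJ.
Qed.

Lemma inWHx_adj C (s t : profile A) w :
  ~ inW r p w -> is_component p C -> s \in C -> t \in C -> adjB p s t ->
  deviation_closed p s -> inWHx r p (pure s) w -> inWHx r p (pure t) w.
Proof.
move=> notW compC sC tC st closed WHs; have [ps pt [i s_t]] := adjBP st.
have ts := pdeviate1_agree s_t.
have ss := pdeviate1_agree (fun j (_ : j != i) => erefl (s j)).
rewrite -ts -deviate1_pure; rewrite -ss -deviate1_pure in WHs.
apply: (inWHx_segment (u := pdelta (s i))) => // [j b|b|b|u /andP[u0 u1]|k a];
  try exact: pdelta_ge0.
- apply: (inX_dfwith_mix compC (pure_mixed s)); rewrite ?sum_pdelta ?(ltW u0) ?u1 //;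
    try exact: pdelta_ge0.
  move=> a pos_j pos_i; have s_a j : j != i -> s j = a j.
    by move/pos_j; rewrite pdelta_gt0 => /eqP->.
  rewrite -(pdeviate1_agree s_a).
  by case: pos_i; rewrite pdelta_gt0 => /eqP->; rewrite ?ss ?ts.
- have dev_s b : dfwith (pure s) (pdelta b) = pure (pdeviate1 s b) := deviate1_pure s b.
  rewrite !dev_s ss ts !deviate1_pure !mlext_pure.
  rewrite !lt_def !p_ge0 !andbT; apply: contra_neq.
  by apply: deviation_closed_adj.
Qed.

End Propagation.

Theorem mainTheorem8 (R : realType) (I : finType) (A : I -> finType)
  (r : I -> profile A -> R) (p : profile A -> R)
  (hA : forall i, (0 < #|A i|)%N)
  (hr : forall i a, 0 < r i a <= 1)
  (hp : forall a, 0 <= p a <= 1)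
  (hnorect : forall C, is_component p C -> ~ rectangular C)
  (w : I -> R) :
  inWH r p w -> ~ inW r p w ->
  exists C (x : mprofile A), is_component p C /\ inXC C x /\
    inWHx r p x w /\ has_joint_exit p x.
Proof.
move=> [x [[C [compC xC]] WHx]] notW; apply: contrapT => no_exit.
have p_ge0 a : 0 <= p a by case/andP: (hp a).
have closed s : s \in C -> inWHx r p (pure s) w -> deviation_closed p s.
  move=> sC WHs; apply: deviation_closed_pure => //; first exact: component_p_eq0 compC sC.
  move=> exit; apply: no_exit; exists C, (pure s).
  by split; [|split; [apply: inXC_pure|]].
have [s0 xs0] := mixed_full_support xC.1.
have s0C : s0 \in C by apply: xC.2.
have WH s : s \in C -> inWHx r p (pure s) w.
  move=> sC; apply: (component_ind (P := fun s => inWHx r p (pure s) w) compC s0C sC).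
    exact (inWHx_purify p_ge0 notW compC xC xs0 WHx).
  move=> u v uC uv WHu; have vC := component_connect compC uC (connect1 uv).
  exact (inWHx_adj p_ge0 notW compC uC vC uv (closed u uC WHu) WHu).
apply: (hnorect C compC); apply: component_rectangular compC _ => s sC.
exact: closed sC (WH s sC).
Qed.
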